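(* Let $A\in\mathbb{R}^{m\times N}$ satisfy the robust binary null space property with constants $0<\rho<1$ and $\tau>0$ relative to a set $K\subseteq[N]$. Let $b=A\mathbb{1}_K+e$ with $e\in\mathbb{R}^m$, $\|e\|_2\le\eta$. Then every solution $\hat z$ of $$\min\|z\|_1\quad\text{subject to}\quad \|Az-b\|_2\le\eta\ \text{ and }\ z\in[0,1]^N$$ satisfies $\|\hat z-\mathbb{1}_K\|_1\le\frac{4\tau}{1-\rho}\eta$.
   Context: $K^C=[N]\setminus K$; $\mathbb{1}_K$ has entries $1$ on $K$, $0$ elsewhere. $H_K=\{w\in\mathbb{R}^N: w_i\le 0 \text{ for } i\in K,\ w_i\ge 0\text{ for } i\in K^C\}$. $A$ satisfies the robust binary null space property with constants $\rho,\tau$ relative to $K$ if $-\sum_{i\in K}v_i\le\rho\sum_{i\in K^C}v_i+\tau\|Av\|_2$ for every $v\in H_K$. *)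

From HB Require Import structures.
From mathcomp Require Import all_boot all_order all_algebra.
From mathcomp Require Import reals.
Set Implicit Arguments. Unset Strict Implicit. Unset Printing Implicit Defensive.
Import Order.TTheory GRing.Theory Num.Theory.
Local Open Scope ring_scope.

Definition norm1 {R : realType} {n : nat} (v : 'cV[R]_n) : R :=
  \sum_(i < n) `|v i 0|.
Definition norm2 {R : realType} {n : nat} (v : 'cV[R]_n) : R :=
  Num.sqrt (\sum_(i < n) (v i 0) ^+ 2).

Definition indic {R : realType} {N : nat} (K : {set 'I_N}) : 'cV[R]_N :=
  \col_(i < N) (if i \in K then 1 else 0).

Definition in_HK {R : realType} {N : nat} (K : {set 'I_N}) (w : 'cV[R]_N) : Prop :=
  forall i : 'I_N, if i \in K then w i 0 <= 0 else 0 <= w i 0.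

Definition robust_binary_NSP {R : realType} {m N : nat} (A : 'M[R]_(m, N))
  (rho tau : R) (K : {set 'I_N}) : Prop :=
  forall v : 'cV[R]_N, in_HK K v ->
    - (\sum_(i in K) v i 0) <= rho * (\sum_(i in ~: K) v i 0) + tau * norm2 (A *m v).

Definition feasible {R : realType} {m N : nat} (A : 'M[R]_(m, N)) (b : 'cV[R]_m)
  (eta : R) (z : 'cV[R]_N) : Prop :=
  norm2 (A *m z - b) <= eta /\ (forall i : 'I_N, 0 <= z i 0 <= 1).

Definition is_solution {R : realType} {m N : nat} (A : 'M[R]_(m, N)) (b : 'cV[R]_m)
  (eta : R) (zh : 'cV[R]_N) : Prop :=
  feasible A b eta zh /\ forall z, feasible A b eta z -> norm1 zh <= norm1 z.

From HB Require Import structures.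
From mathcomp Require Import all_boot all_order all_algebra.
From mathcomp Require Import reals.
From mathcomp Require Import ring lra.
Import Order.TTheory GRing.Theory Num.Theory.
Local Open Scope ring_scope.

(* Put v := zh - 1_K. As zh lies in the unit box, v lies in the cone H_K, so
   ||v||_1 = a + c with a := - sum_(i in K) v_i and c := sum_(i notin K) v_i.
   Since 1_K is feasible, minimality of zh gives c <= a. Both zh and 1_K lie
   in the eta-tube around b, so ||A v||_2 <= 2 eta and the null space property
   gives a <= rho c + 2 tau eta. Eliminating c from the first bound yields
   a + c <= 4 tau eta / (1 - rho). *)

Lemma sumr_sqr_ge0 {R : realDomainType} {I : finType} (c : I -> R) :
  0 <= \sum_i c i ^+ 2.
Proof. by apply: sumr_ge0 => i _; apply: sqr_ge0. Qed.

Lemma sqr_sum_mul_le {R : realFieldType} {I : finType} (a b : I -> R) :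
  (\sum_i a i * b i) ^+ 2 <= (\sum_i a i ^+ 2) * (\sum_i b i ^+ 2).
Proof.
set A := \sum_i a i ^+ 2; set B := \sum_i b i ^+ 2; set X := \sum_i a i * b i.
have lagrange : \sum_i \sum_j (a i * b j - a j * b i) ^+ 2 = 2 * (A * B - X ^+ 2).
  have AB : A * B = \sum_i \sum_j a i ^+ 2 * b j ^+ 2 by rewrite big_distrlr.
  have BA : A * B = \sum_i \sum_j a j ^+ 2 * b i ^+ 2.
    rewrite mulrC big_distrlr; apply: eq_bigr => i _.
    by apply: eq_bigr => j _; rewrite mulrC.
  have XX : X ^+ 2 = \sum_i \sum_j (a i * b i) * (a j * b j).
    by rewrite expr2 big_distrlr.
  have -> : 2 * (A * B - X ^+ 2) = A * B + A * B - 2 * X ^+ 2 by ring.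
  rewrite {1}AB BA XX mulr_sumr -big_split -sumrB /=.
  apply: eq_bigr => i _; rewrite mulr_sumr -big_split -sumrB /=.
  by apply: eq_bigr => j _; ring.
have : 0 <= 2 * (A * B - X ^+ 2).
  by rewrite -lagrange; apply: sumr_ge0 => i _; apply: sumr_sqr_ge0.
by rewrite pmulr_rge0 // subr_ge0.
Qed.

Lemma sum_mul_le_sqrt {R : rcfType} {I : finType} (a b : I -> R) :
  \sum_i a i * b i <= Num.sqrt (\sum_i a i ^+ 2) * Num.sqrt (\sum_i b i ^+ 2).
Proof.
rewrite -sqrtrM ?sumr_sqr_ge0 //; apply: le_trans (ler_norm _) _.
by rewrite -sqrtr_sqr ler_sqrt ?mulr_ge0 ?sumr_sqr_ge0 // sqr_sum_mul_le.
Qed.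

Section Norm2.
Context {R : realType} {n : nat}.
Implicit Types u w : 'cV[R]_n.

Lemma norm2N u : norm2 (- u) = norm2 u.
Proof. by congr Num.sqrt; apply: eq_bigr => i _; rewrite mxE sqrrN. Qed.

Lemma ler_norm2D u w : norm2 (u + w) <= norm2 u + norm2 w.
Proof.
rewrite /norm2 -[leRHS]ger0_norm ?addr_ge0 ?sqrtr_ge0 // -sqrtr_sqr.
rewrite ler_sqrt ?sqr_ge0 // sqrrD !sqr_sqrtr ?sumr_sqr_ge0 //.
have -> : \sum_i (u + w) i 0 ^+ 2 =
    \sum_i u i 0 ^+ 2 + (\sum_i u i 0 * w i 0) *+ 2 + \sum_i w i 0 ^+ 2.
  rewrite -sumrMnl -!big_split /=; apply: eq_bigr => i _; rewrite mxE; ring.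
by rewrite lerD2r lerD2l lerMn2r sum_mul_le_sqrt.
Qed.

Lemma ler_norm2B u w : norm2 (u - w) <= norm2 u + norm2 w.
Proof. by rewrite -(norm2N w) ler_norm2D. Qed.

End Norm2.

Lemma sumr_setC {V : nmodType} {I : finType} (A : {set I}) (F : I -> V) :
  \sum_i F i = \sum_(i in A) F i + \sum_(i in ~: A) F i.
Proof.
by rewrite (bigID (mem A)); congr (_ + _); apply: eq_bigl => i; rewrite in_setC.
Qed.

Lemma norm1_sub_ge0 {R : realType} {n : nat} (z x : 'cV[R]_n) :
  (forall i, 0 <= z i 0) -> (forall i, 0 <= x i 0) ->
  norm1 z - norm1 x = \sum_i (z - x) i 0.
Proof.
move=> z_ge0 x_ge0; rewrite -sumrB.
by apply: eq_bigr => i _; rewrite !mxE !ger0_norm.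
Qed.

Lemma norm2_mul_sub_le {R : realType} {m n : nat} {A : 'M[R]_(m, n)}
    {b : 'cV[R]_m} {eta : R} {z x : 'cV[R]_n} :
  norm2 (A *m z - b) <= eta -> norm2 (A *m x - b) <= eta ->
  norm2 (A *m (z - x)) <= eta + eta.
Proof.
have -> : A *m (z - x) = (A *m z - b) - (A *m x - b).
  by rewrite mulmxBr opprB addrA subrK.
by move=> z_le x_le; apply: le_trans (ler_norm2B _ _) (lerD z_le x_le).
Qed.

Lemma contraction_sum_le {R : realFieldType} {rho t a c : R} :
  0 <= rho -> rho < 1 -> c <= a -> a <= rho * c + t -> a + c <= 2 * t / (1 - rho).
Proof.
move=> rho_ge0 rho_lt1 c_le_a a_le.
have rho_gap : 0 <= rho * (a - c) by rewrite mulr_ge0 ?subr_ge0.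
rewrite ler_pdivlMr ?subr_gt0 //; nra.
Qed.

Section BinaryVectors.
Context {R : realType} {N : nat} (K : {set 'I_N}).

Lemma indic_unit_box i : 0 <= (indic K : 'cV[R]_N) i 0 <= 1.
Proof. by rewrite mxE; case: (i \in K); rewrite ?lexx ?ler01. Qed.

Lemma sub_indic_HK {z : 'cV[R]_N} :
  (forall i, 0 <= z i 0 <= 1) -> in_HK K (z - indic K).
Proof.
move=> z_box i; rewrite !mxE; have /andP := z_box i.
by case: (i \in K) => -[? ?]; lra.
Qed.

Lemma norm1_HK {v : 'cV[R]_N} : in_HK K v ->
  norm1 v = - \sum_(i in K) v i 0 + \sum_(i in ~: K) v i 0.
Proof.
move=> v_HK; rewrite /norm1 (sumr_setC K) -sumrN.
congr (_ + _); apply: eq_bigr => i.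
  by move=> iK; have := v_HK i; rewrite iK => /ler0_norm.
by rewrite in_setC => /negbTE iNK; have := v_HK i; rewrite iNK => /ger0_norm.
Qed.

Lemma feasible_indic {m : nat} (A : 'M[R]_(m, N)) {e : 'cV[R]_m} {eta : R} :
  norm2 e <= eta -> feasible A (A *m indic K + e) eta (indic K).
Proof. by split; [rewrite opprD addrA subrr add0r norm2N | exact: indic_unit_box]. Qed.

End BinaryVectors.

Theorem theorem2p13 (R : realType) (m N : nat) (A : 'M[R]_(m, N))
  (rho tau eta : R) (K : {set 'I_N}) (e : 'cV[R]_m) (zh : 'cV[R]_N) :
  0 < rho -> rho < 1 -> 0 < tau ->
  robust_binary_NSP A rho tau K ->
  norm2 e <= eta ->
  is_solution A (A *m indic K + e) eta zh ->
  norm1 (zh - indic K) <= (4 * tau / (1 - rho)) * eta.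
Proof.
move=> rho_gt0 rho_lt1 tau_gt0 nsp e_le [[zh_tube zh_box] zh_min].
have indic_feas := feasible_indic K A e_le.
set v := zh - indic K.
have v_HK : in_HK K v := sub_indic_HK K zh_box.
have Av_le : norm2 (A *m v) <= eta + eta := norm2_mul_sub_le zh_tube indic_feas.1.
have sum_v_le0 : \sum_i v i 0 <= 0.
  rewrite -norm1_sub_ge0 ?subr_le0 ?zh_min // => i.
    exact: (andP (zh_box i)).1.
  exact: (andP (indic_unit_box K i)).1.
have compl_le : \sum_(i in ~: K) v i 0 <= - \sum_(i in K) v i 0.
  by rewrite -subr_le0 opprK addrC -sumr_setC.
have nsp_le :
    - \sum_(i in K) v i 0 <= rho * \sum_(i in ~: K) v i 0 + tau * (eta + eta).
  by apply: le_trans (nsp v v_HK) _; rewrite lerD2l ler_pM2l.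
have -> : 4 * tau / (1 - rho) * eta = 2 * (tau * (eta + eta)) / (1 - rho) by ring.
rewrite (norm1_HK K v_HK).
exact: contraction_sum_le (ltW rho_gt0) rho_lt1 compl_le nsp_le.
Qed.
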